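(* Fix $K\ge1$, points $\mathbf{w}_1,\dots,\mathbf{w}_K\in\mathbb{R}^2$ and constants $H>0$, $\rho_0>0$, $\sigma^2>0$, $r^*>0$, $P_c\ge0$, $E_1,\dots,E_K>0$, $\tilde P_1,\dots,\tilde P_K>0$. For $\mathbf{q}\in\mathbb{R}^2$ write $d_k=\sqrt{\|\mathbf{q}-\mathbf{w}_k\|^2+H^2}$ and $h_k=\rho_0/d_k^2$. Problem (P1): minimize $\zeta$ over $(\zeta,\mathbf{q},\mathbf{p},\pi)$ with $\zeta\in\mathbb{R}$, $\mathbf q\in\mathbb{R}^2$, $\mathbf p\in\mathbb{R}^K$, $\pi$ a permutation of $\{1,\dots,K\}$, subject to, for all $m$: $p_{\pi(m)}+P_c\le\zeta E_{\pi(m)}$; $0\le p_{\pi(m)}\le\tilde P_{\pi(m)}$; $\log_2\big(1+\frac{p_{\pi(m)}h_{\pi(m)}}{\sum_{n=m+1}^Kp_{\pi(n)}h_{\pi(n)}+\sigma^2}\big)\ge r^*$; and $d_{\pi(1)}\le d_{\pi(2)}\le\dots\le d_{\pi(K)}$. Problem (P2): minimize $\zeta$ over $(\zeta,\mathbf{q},\mathbf{p},\boldsymbol\alpha)$ with $\boldsymbol\alpha=(\alpha_{k,j})_{k,j=1}^K$, subject to, for all $k$: $p_k+P_c\le\zeta E_k$; $0\le p_k\le\tilde P_k$; $\log_2\big(1+\frac{p_kh_k}{\sum_{j\ne k}\alpha_{k,j}p_jh_j+\sigma^2}\big)\ge r^*$; for all $k\ne j$: $\alpha_{k,j}=0$ if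 $d_k>d_j$, $\alpha_{k,j}=1$ if $d_k<d_j$, $\alpha_{k,j}\in\{0,1\}$ if $d_k=d_j$; $\alpha_{k,k}=0$; $\alpha_{k,j}+\alpha_{j,k}=1$ for $k\ne j$; $\alpha_{k,j}+\alpha_{j,i}-1\le\alpha_{k,i}$ for all $k,j,i$. Let $(\zeta,\mathbf{q},\mathbf{p},\boldsymbol\alpha)$ be feasible for (P2), and let $f(k)=K-\sum_{j=1}^K\alpha_{k,j}$. Then $f$ is a permutation of $\{1,\dots,K\}$, and setting $\pi'=f^{-1}$ and $\mathbf p'$ with $p'_{\pi'(m)}=p_{f^{-1}(m)}$ for all $m$, the tuple $(\zeta,\mathbf q,\mathbf p',\pi')$ is feasible for (P1); moreover the objective value of (P1) at $(\mathbf q,\mathbf p',\pi')$ equals that of (P2) at $(\mathbf q,\mathbf p,\boldsymbol\alpha)$ (both equal the least admissible $\zeta$, namely $\max_k (p_k+P_c)/E_k$).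
   Context: (P1) models maximizing the minimum device lifetime $E_k/(p_k+P_c)$ (via $\zeta=1/\text{lifetime}$) in uplink NOMA to a UAV with permutation decoding order $\pi$ ($\pi(m)=k$: device $k$ is decoded $m$-th); (P2) is the same with binary decoding-order variables $\alpha_{k,j}$ ($\alpha_{k,j}=1$: device $k$ decoded before device $j$). $\tilde P_k$ is the allowable transmit power of device $k$. *)

From HB Require Import structures.
From mathcomp Require Import all_boot all_order all_fingroup all_algebra.
From mathcomp Require Import reals exp.
Set Implicit Arguments. Unset Strict Implicit. Unset Printing Implicit Defensive.
Import Order.TTheory GRing.Theory Num.Theory.
Local Open Scope ring_scope.

Definition log2 {R : realType} (x : R) : R := ln x / ln 2.

Definition dist {R : realType} (H : R) (q w : R * R) : R :=
  Num.sqrt ((q.1 - w.1) ^+ 2 + (q.2 - w.2) ^+ 2 + H ^+ 2).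

Definition gain {R : realType} (rho0 H : R) (q w : R * R) : R :=
  rho0 / (dist H q w) ^+ 2.

(* Feasibility for (P1); devices indexed by 'I_K (0-based), pi m = device decoded (m+1)-th *)
Definition feasible1 {R : realType} (K : nat) (w : 'I_K -> R * R)
  (H rho0 sigma2 rstar Pc : R) (E Pt : 'I_K -> R)
  (zeta : R) (q : R * R) (p : 'I_K -> R) (pi : {perm 'I_K}) : Prop :=
  let h k := gain rho0 H q (w k) in
  let d k := dist H q (w k) in
  [/\ (forall m : 'I_K, p (pi m) + Pc <= zeta * E (pi m)),
      (forall m : 'I_K, 0 <= p (pi m) <= Pt (pi m)),
      (forall m : 'I_K,
          rstar <= log2 (1 + p (pi m) * h (pi m) /
                   (\sum_(n < K | (m < n)%N) p (pi n) * h (pi n) + sigma2))) &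
      (forall m n : 'I_K, (m <= n)%N -> d (pi m) <= d (pi n))].

(* Feasibility for (P2); alpha k j = 1 means device k decoded before device j *)
Definition feasible2 {R : realType} (K : nat) (w : 'I_K -> R * R)
  (H rho0 sigma2 rstar Pc : R) (E Pt : 'I_K -> R)
  (zeta : R) (q : R * R) (p : 'I_K -> R) (alpha : 'I_K -> 'I_K -> R) : Prop :=
  let h k := gain rho0 H q (w k) in
  let d k := dist H q (w k) in
  [/\ (forall k : 'I_K, p k + Pc <= zeta * E k),
      (forall k : 'I_K, 0 <= p k <= Pt k) &
      (forall k : 'I_K,
          rstar <= log2 (1 + p k * h k /
                   (\sum_(j < K | j != k) alpha k j * p j * h j + sigma2)))] /\
  [/\
      (forall k j : 'I_K, k != j ->
          [/\ d j < d k -> alpha k j = 0,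
              d k < d j -> alpha k j = 1 &
              d k = d j -> alpha k j = 0 \/ alpha k j = 1]),
      (forall k : 'I_K, alpha k k = 0),
      (forall k j : 'I_K, k != j -> alpha k j + alpha j k = 1) &
      (forall k j i : 'I_K, alpha k j + alpha j i - 1 <= alpha k i)].

(* Objective values: least admissible zeta given the other variables,
   max over devices of (p_k + Pc) / E_k (written in each problem's own indexing). *)
Definition obj1 {R : realType} (K : nat) (Pc : R) (E : 'I_K -> R)
  (p : 'I_K -> R) (pi : {perm 'I_K}) : R :=
  \big[Num.max/0]_(m < K) ((p (pi m) + Pc) / E (pi m)).

Definition obj2 {R : realType} (K : nat) (Pc : R) (E : 'I_K -> R)
  (p : 'I_K -> R) : R :=
  \big[Num.max/0]_(k < K) ((p k + Pc) / E k).

From HB Require Import structures.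
From mathcomp Require Import all_boot all_order all_fingroup all_algebra.
From mathcomp Require Import reals exp.
Set Implicit Arguments. Unset Strict Implicit. Unset Printing Implicit Defensive.
Import Order.TTheory GRing.Theory Num.Theory.
Local Open Scope ring_scope.

(* The constraints on alpha say exactly that "alpha_{k,j} = 1" is a strict total
   order on the devices.  Ranking each device by the number of devices decoded
   before it is then a permutation, and K - sum_j alpha_{k,j} is that rank plus one.
   Along the inverse permutation, the interference sum over {j | alpha_{k,j} = 1}
   becomes the SIC sum over later decoding positions, and the distance constraints
   on alpha make d nondecreasing in the decoding order. *)

Section RankOfStrictTotalOrder.
Variables (T : finType) (lt : rel T).
Hypotheses (lt_irr : irreflexive lt) (lt_trans : transitive lt)
  (lt_total : forall x y, x != y -> lt x y || lt y x).

Definition rank x := #|[set y | lt y x]|.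

Lemma lt_asym x y : lt x y -> ~~ lt y x.
Proof. by move=> xy; apply/negP => yx; have := lt_trans xy yx; rewrite lt_irr. Qed.

Lemma rank_mono x y : lt x y -> (rank x < rank y)%N.
Proof.
move=> xy; apply: proper_card; apply/properP; split.
  by apply/subsetP => z; rewrite !inE => zx; exact: lt_trans zx xy.
by exists x; rewrite !inE ?lt_irr.
Qed.

Lemma lt_rank x y : lt x y = (rank x < rank y)%N.
Proof.
apply/idP/idP => [|rxy]; first exact: rank_mono.
have [exy|nxy] := eqVneq x y; first by rewrite exy ltnn in rxy.
have /orP[//|yx] := lt_total nxy.
by have := rank_mono yx; rewrite ltnNge ltnW.
Qed.

Lemma rank_inj : injective rank.
Proof.
move=> x y rxy; apply/eqP; apply/negPn/negP => /lt_total.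
by rewrite !lt_rank rxy ltnn.
Qed.

Lemma rank_succ_card x : ((rank x).+1 + #|[set y | lt x y]|)%N = #|T|.
Proof.
have -> : [set y | lt x y] = ~: (x |: [set y | lt y x]).
  apply/setP => y; rewrite !inE negb_or.
  have [->|nyx] := eqVneq y x; first by rewrite lt_irr.
  have /orP[yx|xy] := lt_total nyx; first by rewrite yx (negbTE (lt_asym yx)).
  by rewrite xy lt_asym.
by rewrite -(cardsC (x |: [set y | lt y x])) cardsU1 inE lt_irr.
Qed.

End RankOfStrictTotalOrder.

Section RankPermutation.
Variables (n : nat) (lt : rel 'I_n).
Hypotheses (lt_irr : irreflexive lt) (lt_trans : transitive lt)
  (lt_total : forall x y, x != y -> lt x y || lt y x).

Lemma rank_ltn k : (rank lt k < n)%N.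
Proof.
by have := leq_addr #|[set y | lt k y]| (rank lt k).+1; rewrite rank_succ_card ?card_ord.
Qed.

Definition rank_perm : {perm 'I_n} :=
  perm (fun x y (e : Ordinal (rank_ltn x) = Ordinal (rank_ltn y)) =>
          rank_inj lt_irr lt_trans lt_total (congr1 val e)).

Lemma rank_permE k : rank_perm k = rank lt k :> nat.
Proof. by rewrite permE. Qed.

Lemma lt_rank_permV i j : lt (rank_perm^-1 i)%g (rank_perm^-1 j)%g = (i < j)%N.
Proof.
by rewrite (lt_rank lt_irr lt_trans lt_total) -!rank_permE !permKV.
Qed.

End RankPermutation.

Section PrecedenceMatrix.
Variables (T : finType) (R : numDomainType) (alpha : T -> T -> R).
Hypotheses (alpha01 : forall k j, alpha k j = 0 \/ alpha k j = 1)
  (alpha_diag : forall k, alpha k k = 0)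
  (alpha_skew : forall k j, k != j -> alpha k j + alpha j k = 1)
  (alpha_trans : forall k j i, alpha k j + alpha j i - 1 <= alpha k i).

Definition precedes : rel T := fun k j => alpha k j == 1.

Lemma alpha_precedes k j : alpha k j = (precedes k j)%:R.
Proof. by rewrite /precedes; case: (alpha01 k j) => ->; rewrite ?eqxx // eq_sym oner_eq0. Qed.

Lemma precedes_irr : irreflexive precedes.
Proof. by move=> k; rewrite /precedes alpha_diag eq_sym oner_eq0. Qed.

Lemma precedes_trans : transitive precedes.
Proof.
move=> j k i kj ji; have := alpha_trans k j i.
rewrite !alpha_precedes kj ji addrK.
by case: (precedes k i); rewrite // ler10.
Qed.

Lemma precedes_total k j : k != j -> precedes k j || precedes j k.
Proof.
move=> /alpha_skew; rewrite !alpha_precedes.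
by case: (precedes k j); case: (precedes j k); rewrite //= addr0 => /eqP; rewrite eq_sym oner_eq0.
Qed.

Lemma sum_alpha k : \sum_j alpha k j = #|[set j | precedes k j]|%:R.
Proof.
rewrite -sum1_card natr_sum [RHS]big_mkcond /=; apply: eq_bigr => j _.
by rewrite alpha_precedes inE; case: (precedes k j).
Qed.

End PrecedenceMatrix.

Lemma alpha01_of_dist (T : finType) (R : realDomainType) (d : T -> R)
    (alpha : T -> T -> R) :
  (forall k j, k != j ->
     [/\ d j < d k -> alpha k j = 0, d k < d j -> alpha k j = 1 &
         d k = d j -> alpha k j = 0 \/ alpha k j = 1]) ->
  (forall k, alpha k k = 0) ->
  forall k j, alpha k j = 0 \/ alpha k j = 1.
Proof.
move=> hdist hdiag k j; have [->|nkj] := eqVneq k j; first by left.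
have [lt0 lt1 eq01] := hdist k j nkj.
by case: (ltgtP (d j) (d k)) => [/lt0|/lt1|/esym/eq01]; [left|right|].
Qed.

Section DecodingOrder.
Variables (R : nzRingType) (K : nat) (alpha : 'I_K -> 'I_K -> R) (s : {perm 'I_K}).
Hypothesis alpha_s : forall m n, alpha (s m) (s n) = (m < n)%N%:R.

Lemma sum_alpha_perm (F : 'I_K -> R) m :
  \sum_(j < K | j != s m) alpha (s m) j * F j = \sum_(n < K | (m < n)%N) F (s n).
Proof.
rewrite (reindex_inj (@perm_inj _ s)) /= big_mkcond [RHS]big_mkcond /=.
apply: eq_bigr => n _; rewrite (inj_eq (@perm_inj _ s)) alpha_s.
have [->|nm] := eqVneq n m; first by rewrite ltnn.
by case: (m < n)%N; rewrite ?mul1r ?mul0r.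
Qed.

Lemma sorted_along_perm (S : realDomainType) (d : 'I_K -> S) :
  (forall k j, k != j -> d j < d k -> alpha k j = 0) ->
  forall m n : 'I_K, (m <= n)%N -> d (s m) <= d (s n).
Proof.
move=> hdist m n; rewrite leq_eqVlt => /orP[/eqP/val_inj->//|mn].
have nmn : s m != s n by rewrite (inj_eq (@perm_inj _ s)) neq_ltn mn.
rewrite leNgt; apply/negP => /(hdist _ _ nmn)/eqP.
by rewrite alpha_s mn oner_eq0.
Qed.

End DecodingOrder.

Theorem proposition2 (R : realType) (K : nat) (w : 'I_K -> R * R)
  (H rho0 sigma2 rstar Pc : R) (E Pt : 'I_K -> R)
  (hK : (1 <= K)%N) (hH : 0 < H) (hrho0 : 0 < rho0) (hsigma2 : 0 < sigma2)
  (hrstar : 0 < rstar) (hPc : 0 <= Pc)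
  (hE : forall k, 0 < E k) (hPt : forall k, 0 < Pt k)
  (zeta : R) (q : R * R) (p : 'I_K -> R) (alpha : 'I_K -> 'I_K -> R) :
  feasible2 w H rho0 sigma2 rstar Pc E Pt zeta q p alpha ->
  exists (pi' : {perm 'I_K}) (p' : 'I_K -> R),
    (* f(k) = K - sum_j alpha_{k,j} is a permutation (1-based), with pi' = f^{-1} *)
    (forall k : 'I_K, ((pi'^-1)%g k).+1%:R = K%:R - \sum_(j < K) alpha k j) /\
    (* p'_{pi'(m)} = p_{f^{-1}(m)} *)
    (forall m : 'I_K, p' (pi' m) = p (pi' m)) /\
    feasible1 w H rho0 sigma2 rstar Pc E Pt zeta q p' pi' /\
    obj1 Pc E p' pi' = obj2 Pc E p.
Proof.
move=> [[hpow hbox hrate] [hdist hdiag hskew htrans]].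
have h01 := alpha01_of_dist hdist hdiag.
have irr := precedes_irr hdiag.
have tr := precedes_trans h01 htrans.
have tot := precedes_total h01 hskew.
pose s := rank_perm irr tr tot.
have alpha_s m n : alpha (s^-1 m)%g (s^-1 n)%g = (m < n)%N%:R.
  by rewrite (alpha_precedes h01) lt_rank_permV.
exists (s^-1)%g, p; split; [|split=> //; split].
- move=> k; rewrite invgK rank_permE (sum_alpha h01).
  have := rank_succ_card irr tr tot k; rewrite card_ord => eK.
  by rewrite -[X in X%:R - _]eK natrD addrK.
- split=> [m|m|m|]; [exact: hpow | exact: hbox | |].
  + by have := hrate (s^-1 m)%g; under eq_bigr do rewrite -mulrA; rewrite sum_alpha_perm.
  + by apply: (sorted_along_perm alpha_s (d := fun k => dist H q (w k))) => k j /hdist[+ _ _].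
- by apply/esym/(reindex_inj (@perm_inj _ (s^-1)%g)).
Qed.
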